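(* Let $P$ be the transition matrix of a reversible and ergodic Markov chain on $V=\{1,\dots,N\}$ with stationary distribution $\pi$, and consider any functional-router model for $P$ (any choice of routers $\sigma_v$, $v\in V$) with any initial configuration $\chi^{(0)}$. Then for every $w\in V$, every $T\ge 0$ and every $\gamma$ with $0<\gamma<1/2$, $$\left|\chi^{(T)}_w-\mu^{(T)}_w\right|\le \Psi_\sigma\,\frac{2(1-\gamma)}{1-2\gamma}\,\tau(\gamma)\,\frac{\pi_w}{\pi_{\min}}\,\Delta .$$
   Context: Let $V=\{1,\dots,N\}$ and let $P\in\mathbb{R}_{\ge 0}^{N\times N}$ be a stochastic matrix (entries may be irrational) that is ergodic (irreducible and aperiodic), with unique stationary distribution $\pi$; $\pi_{\min}=\min_{v}\pi_v$. $P$ is reversible if $\pi_uP_{u,v}=\pi_vP_{v,u}$ for all $u,v\in V$. For $v\in V$ let $\mathcal N(v)=\{u\in V: P_{v,u}>0\}$ (which contains $v$ if $P_{v,v}>0$), $\delta(v)=|\mathcal N(v)|$ and $\Delta=\max_v\delta(v)$. The total variation distance is $d_{TV}(\xi,\zeta)=\frac12\|\xi-\zeta\|_1$; the mixing time is $\tau(\varepsilon)=\max_{v\in V}\min\{t\in\mathbb{Z}_{\ge0}: d_{TV}(P^t_{v,\cdot},\pi)\le\varepsilon\}$, where $P^t_{v,\cdot}$ is row $v$ of $P^t$; the mixing rate is $t^*=\tau(1/4)$. A functional-router model consists of functions (routers) $\sigma_v:\mathbb{Z}_{\ge0}\to\mathcal N(v)$ for each $v\in V$. Write $I_{v,u}[z,z')=|\{j\in\{z,\dots,z'-1\}:\sigma_v(j)=u\}|$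 (equal to $0$ if $z'\le z$). Given an initial configuration $\chi^{(0)}\in\mathbb{Z}_{\ge0}^N$ with $\sum_v\chi^{(0)}_v=M$, define recursively $Z^{(t)}_{v,u}=I_{v,u}\big[\sum_{s=0}^{t-1}\chi^{(s)}_v,\ \sum_{s=0}^{t}\chi^{(s)}_v\big)$ and $\chi^{(t+1)}_u=\sum_{v\in V}Z^{(t)}_{v,u}$. Let $\mu^{(0)}=\chi^{(0)}$ and $\mu^{(t)}=\mu^{(0)}P^t$ (row vector times matrix). Define $\Psi_\sigma=\sup_{v\in V,\,u\in\mathcal N(v),\,t\ge0}\big|Z^{(t)}_{v,u}-\chi^{(t)}_vP_{v,u}\big|$. *)

From Stdlib Require Import Reals Lra Lia Arith List.
Import ListNotations.
Open Scope R_scope.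

(* V = {1..N} is represented by the indices 0..N-1 (nat); a matrix is nat -> nat -> R,
   only its entries with indices < N are meaningful. *)

Definition sumV (N : nat) (f : nat -> R) : R := fold_right Rplus 0 (map f (seq 0 N)).
Definition sumVn (N : nat) (f : nat -> nat) : nat := fold_right Nat.add 0%nat (map f (seq 0 N)).

Fixpoint Ppow (N : nat) (P : nat -> nat -> R) (t : nat) (u v : nat) : R :=
  match t with
  | O => if Nat.eqb u v then 1 else 0
  | S t' => sumV N (fun w => Ppow N P t' u w * P w v)
  end.

Definition stochastic (N : nat) (P : nat -> nat -> R) : Prop :=
  (forall u v, (u < N)%nat -> (v < N)%nat -> 0 <= P u v) /\
  (forall u, (u < N)%nat -> sumV N (fun v => P u v) = 1).

Definition irreducible (N : nat) (P : nat -> nat -> R) : Prop :=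
  forall u v, (u < N)%nat -> (v < N)%nat -> exists t, 0 < Ppow N P t u v.

(* period of every state is 1: the gcd of {t >= 1 : P^t_{v,v} > 0} is 1 *)
Definition aperiodic (N : nat) (P : nat -> nat -> R) : Prop :=
  forall v, (v < N)%nat ->
    forall d : nat, (forall t, (1 <= t)%nat -> 0 < Ppow N P t v v -> Nat.divide d t) -> d = 1%nat.

Definition ergodic (N : nat) (P : nat -> nat -> R) : Prop :=
  irreducible N P /\ aperiodic N P.

Definition stationary (N : nat) (P : nat -> nat -> R) (pi : nat -> R) : Prop :=
  (forall v, (v < N)%nat -> 0 <= pi v) /\ sumV N pi = 1 /\
  (forall v, (v < N)%nat -> sumV N (fun u => pi u * P u v) = pi v).

Definition reversible (N : nat) (P : nat -> nat -> R) (pi : nat -> R) : Prop :=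
  forall u v, (u < N)%nat -> (v < N)%nat -> pi u * P u v = pi v * P v u.

(* pi_min (N >= 1 assumed where used) *)
Definition pimin (N : nat) (pi : nat -> R) : R := fold_right Rmin (pi 0%nat) (map pi (seq 0 N)).

Definition posb (x : R) : bool := if Rlt_dec 0 x then true else false.
Definition degree (N : nat) (P : nat -> nat -> R) (v : nat) : nat :=
  length (filter (fun u => posb (P v u)) (seq 0 N)).
Definition maxdeg (N : nat) (P : nat -> nat -> R) : nat :=
  fold_right Nat.max 0%nat (map (degree N P) (seq 0 N)).

Definition dTV_row (N : nat) (P : nat -> nat -> R) (pi : nat -> R) (t v : nat) : R :=
  / 2 * sumV N (fun u => Rabs (Ppow N P t v u - pi u)).

Definition first_hit (N : nat) (P : nat -> nat -> R) (pi : nat -> R) (eps : R) (v t : nat) : Prop :=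
  dTV_row N P pi t v <= eps /\ (forall s, (s < t)%nat -> eps < dTV_row N P pi s v).

(* is_tau ... eps T : T = tau(eps) = max_v min{t : d_TV(P^t_v, pi) <= eps} *)
Definition is_tau (N : nat) (P : nat -> nat -> R) (pi : nat -> R) (eps : R) (T : nat) : Prop :=
  (exists v, (v < N)%nat /\ first_hit N P pi eps v T) /\
  (forall v t, (v < N)%nat -> first_hit N P pi eps v t -> (t <= T)%nat).

Definition valid_routers (N : nat) (P : nat -> nat -> R) (sigma : nat -> nat -> nat) : Prop :=
  forall v j, (v < N)%nat -> (sigma v j < N)%nat /\ 0 < P v (sigma v j).

Definition Icount (sigma : nat -> nat -> nat) (v u z z' : nat) : nat :=
  length (filter (fun j => Nat.eqb (sigma v j) u) (seq z (z' - z))).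

(* state at time t: (chi^(t), fun v => sum_{s<t} chi^(s)_v) *)
Fixpoint rstate (N : nat) (sigma : nat -> nat -> nat) (chi0 : nat -> nat) (t : nat)
  : (nat -> nat) * (nat -> nat) :=
  match t with
  | O => (chi0, fun _ => 0%nat)
  | S t' =>
      let (c, cum) := rstate N sigma chi0 t' in
      (fun u => sumVn N (fun v => Icount sigma v u (cum v) (cum v + c v)),
       fun v => (cum v + c v)%nat)
  end.

Definition chi (N : nat) (sigma : nat -> nat -> nat) (chi0 : nat -> nat) (t : nat) : nat -> nat :=
  fst (rstate N sigma chi0 t).
Definition cumchi (N : nat) (sigma : nat -> nat -> nat) (chi0 : nat -> nat) (t : nat) : nat -> nat :=
  snd (rstate N sigma chi0 t).

Definition Zflow (N : nat) (sigma : nat -> nat -> nat) (chi0 : nat -> nat) (t v u : nat) : nat :=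
  Icount sigma v u (cumchi N sigma chi0 t v) (cumchi N sigma chi0 t v + chi N sigma chi0 t v).

Definition mu (N : nat) (P : nat -> nat -> R) (chi0 : nat -> nat) (t w : nat) : R :=
  sumV N (fun v => INR (chi0 v) * Ppow N P t v w).

(* B is an upper bound of the set whose supremum is Psi_sigma *)
Definition Psi_bound (N : nat) (P : nat -> nat -> R) (sigma : nat -> nat -> nat)
  (chi0 : nat -> nat) (B : R) : Prop :=
  forall v u t, (v < N)%nat -> (u < N)%nat -> 0 < P v u ->
    Rabs (INR (Zflow N sigma chi0 t v u) - INR (chi N sigma chi0 t v) * P v u) <= B.

(* Let e^(t)_u = chi^(t+1)_u - (chi^(t) P)_u be the one-step routing error.  Duhamel's
   formula gives chi^(T)_w - mu^(T)_w = sum_{s<T} sum_u e^(T-1-s)_u P^s_{u,w}.  Each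
   e^(t)_u is a sum over v of router discrepancies Z_{v,u} - chi_v P_{v,u}; these are
   bounded by Psi, vanish off the edges of P and sum to 0 over u, so pi_w may be
   subtracted from P^s_{u,w}.  Reversibility, pi_u |P^s_{u,w} - pi_w| = pi_w |P^s_{w,u} - pi_u|,
   then bounds the s-th term by Psi Delta (pi_w / pi_min) ||P^s_{w,.} - pi||_1.
   Finally, every row is within 2 gamma of pi at time tau(gamma) (ergodic chains have a
   strictly positive power, whence convergence by Doeblin's argument, and the distance
   of a row never increases), after which the distance decays by a factor 2 gamma per
   block of tau(gamma) steps; summing gives
   sum_{s<T} ||P^s_{w,.} - pi||_1 <= 2 tau(gamma) (1 - gamma) / (1 - 2 gamma). *)

From Stdlib Require Import Reals Lra Lia Arith List Classical.
Open Scope R_scope.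

(** * Finite sums over [V = {0, ..., n-1}] *)

Lemma fold_Rplus_app (l l' : list R) :
  fold_right Rplus 0 (l ++ l') = fold_right Rplus 0 l + fold_right Rplus 0 l'.
Proof. induction l as [|a l IH]; simpl; [lra | rewrite IH; lra]. Qed.

Lemma fold_add_app (l l' : list nat) :
  fold_right Nat.add 0%nat (l ++ l') = (fold_right Nat.add 0 l + fold_right Nat.add 0 l')%nat.
Proof. induction l as [|a l IH]; simpl; [lia | rewrite IH; lia]. Qed.

Lemma sumV_S n f : sumV (S n) f = sumV n f + f n.
Proof. unfold sumV. rewrite seq_S, map_app, fold_Rplus_app. simpl. lra. Qed.

Lemma sumVn_S n f : sumVn (S n) f = (sumVn n f + f n)%nat.
Proof. unfold sumVn. rewrite seq_S, map_app, fold_add_app. simpl. lia. Qed.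

Lemma sumVn_INR n f : INR (sumVn n f) = sumV n (fun i => INR (f i)).
Proof.
  induction n as [|n IH]; [reflexivity|].
  now rewrite sumVn_S, sumV_S, plus_INR, IH.
Qed.

Lemma sumV_ext n f g : (forall i, (i < n)%nat -> f i = g i) -> sumV n f = sumV n g.
Proof.
  induction n as [|n IH]; intros H; [reflexivity|].
  rewrite !sumV_S, IH by (intros; apply H; lia). now rewrite (H n) by lia.
Qed.

Lemma sumV_plus n f g : sumV n (fun i => f i + g i) = sumV n f + sumV n g.
Proof. induction n as [|n IH]; [unfold sumV; simpl; lra|]. rewrite !sumV_S, IH. lra. Qed.

Lemma sumV_minus n f g : sumV n (fun i => f i - g i) = sumV n f - sumV n g.
Proof. induction n as [|n IH]; [unfold sumV; simpl; lra|]. rewrite !sumV_S, IH. lra. Qed.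

Lemma sumV_scal_l n c f : sumV n (fun i => c * f i) = c * sumV n f.
Proof. induction n as [|n IH]; [unfold sumV; simpl; lra|]. rewrite !sumV_S, IH. lra. Qed.

Lemma sumV_scal_r n c f : sumV n (fun i => f i * c) = sumV n f * c.
Proof. induction n as [|n IH]; [unfold sumV; simpl; lra|]. rewrite !sumV_S, IH. lra. Qed.

Lemma sumV_const n c : sumV n (fun _ => c) = INR n * c.
Proof. induction n as [|n IH]; [unfold sumV; simpl; lra|]. rewrite sumV_S, IH, S_INR. lra. Qed.

Lemma sumV_le n f g : (forall i, (i < n)%nat -> f i <= g i) -> sumV n f <= sumV n g.
Proof.
  induction n as [|n IH]; intros H; [unfold sumV; simpl; lra|]. rewrite !sumV_S.
  assert (sumV n f <= sumV n g) by (apply IH; intros; apply H; lia).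
  specialize (H n ltac:(lia)). lra.
Qed.

Lemma sumV_zero n f : (forall i, (i < n)%nat -> f i = 0) -> sumV n f = 0.
Proof. intros H. rewrite (sumV_ext n f (fun _ => 0)) by auto. rewrite sumV_const. lra. Qed.

Lemma sumV_nonneg n f : (forall i, (i < n)%nat -> 0 <= f i) -> 0 <= sumV n f.
Proof. intros H. rewrite <- (sumV_zero n (fun _ => 0)) by auto. now apply sumV_le. Qed.

Lemma sumV_abs n f : Rabs (sumV n f) <= sumV n (fun i => Rabs (f i)).
Proof.
  induction n as [|n IH]; [unfold sumV; simpl; rewrite Rabs_R0; lra|].
  rewrite !sumV_S. eapply Rle_trans; [apply Rabs_triang|]. lra.
Qed.

Lemma sumV_swap n m f :
  sumV n (fun i => sumV m (fun j => f i j)) = sumV m (fun j => sumV n (fun i => f i j)).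
Proof.
  induction n as [|n IH].
  - rewrite (sumV_zero m) by reflexivity. reflexivity.
  - rewrite sumV_S, IH, <- sumV_plus. apply sumV_ext. intros. now rewrite sumV_S.
Qed.

Lemma sumV_single n f i :
  (forall j, (j < n)%nat -> 0 <= f j) -> (i < n)%nat -> f i <= sumV n f.
Proof.
  induction n as [|n IH]; intros H Hi; [lia|]. rewrite sumV_S.
  assert (0 <= sumV n f) by (apply sumV_nonneg; intros; apply H; lia).
  destruct (Nat.eq_dec i n) as [->|Hne]; [lra|].
  assert (f i <= sumV n f) by (apply IH; [intros; apply H|]; lia).
  specialize (H n ltac:(lia)). lra.
Qed.

Lemma sumV_point n h i :
  (i < n)%nat -> (forall j, (j < n)%nat -> j <> i -> h j = 0) -> sumV n h = h i.
Proof.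
  induction n as [|n IH]; intros Hi H; [lia|]. rewrite sumV_S.
  destruct (Nat.eq_dec i n) as [->|Hne].
  - rewrite sumV_zero; [lra|]. intros; apply H; lia.
  - rewrite IH by (try intros; try apply H; lia). rewrite (H n) by lia. lra.
Qed.

Lemma sumV_add a b f : sumV (a + b) f = sumV a f + sumV b (fun r => f (a + r)%nat).
Proof.
  induction b as [|b IH].
  { rewrite Nat.add_0_r. change (sumV 0 (fun r => f (a + r)%nat)) with 0. lra. }
  rewrite Nat.add_succ_r, !sumV_S, IH. lra.
Qed.

Lemma sumV_shift n f : sumV (S n) f = f 0%nat + sumV n (fun i => f (S i)).
Proof.
  induction n as [|n IH]; [rewrite sumV_S; unfold sumV; simpl; lra|].
  rewrite sumV_S, IH, sumV_S. lra.
Qed.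

Lemma sumV_count n (p : nat -> bool) :
  INR (length (filter p (seq 0 n))) = sumV n (fun i => if p i then 1 else 0).
Proof.
  induction n as [|n IH]; [reflexivity|].
  rewrite seq_S, filter_app, length_app, plus_INR, IH, sumV_S.
  simpl. destruct (p n); simpl; lra.
Qed.

Lemma sumV_pos_entry n f :
  (forall i, (i < n)%nat -> 0 <= f i) -> sumV n f = 1 -> exists i, (i < n)%nat /\ 0 < f i.
Proof.
  intros Hf Hsum. apply NNPP. intros Hno.
  assert (sumV n f <= sumV n (fun _ => 0)).
  { apply sumV_le. intros i Hi. apply Rnot_lt_le. intros Hpos. apply Hno; eauto. }
  rewrite sumV_const in H. lra.
Qed.

(** * Powers of a stochastic matrix *)

Section MatrixPowers.
Variables (N : nat) (P : nat -> nat -> R).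

Lemma sum_delta_left x f : (x < N)%nat -> sumV N (fun y => Ppow N P 0 x y * f y) = f x.
Proof.
  intros Hx. rewrite (sumV_point N _ x Hx); simpl; [rewrite Nat.eqb_refl; lra|].
  intros j Hj Hne. destruct (Nat.eqb_spec x j); [lia|lra].
Qed.

Lemma sum_delta_right x f : (x < N)%nat -> sumV N (fun y => f y * Ppow N P 0 y x) = f x.
Proof.
  intros Hx. rewrite (sumV_point N _ x Hx); simpl; [rewrite Nat.eqb_refl; lra|].
  intros j Hj Hne. destruct (Nat.eqb_spec j x); [lia|lra].
Qed.

Lemma Ppow_1 u v : (u < N)%nat -> Ppow N P 1 u v = P u v.
Proof. intros Hu. exact (sum_delta_left u (fun w => P w v) Hu). Qed.

Lemma Ppow_add a b x z : (z < N)%nat ->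
  Ppow N P (a + b) x z = sumV N (fun y => Ppow N P a x y * Ppow N P b y z).
Proof.
  revert z. induction b as [|b IH]; intros z Hz.
  - now rewrite Nat.add_0_r, sum_delta_right.
  - rewrite Nat.add_succ_r. simpl Ppow.
    transitivity (sumV N (fun w => sumV N (fun y => Ppow N P a x y * Ppow N P b y w * P w z))).
    { apply sumV_ext; intros w Hw. rewrite IH, <- sumV_scal_r by lia.
      apply sumV_ext; intros; ring. }
    rewrite sumV_swap. apply sumV_ext; intros y Hy.
    rewrite <- sumV_scal_l. apply sumV_ext; intros; ring.
Qed.

Lemma Ppow_S_left s x z : (x < N)%nat -> (z < N)%nat ->
  Ppow N P (S s) x z = sumV N (fun y => P x y * Ppow N P s y z).
Proof.
  intros Hx Hz. replace (S s) with (1 + s)%nat by lia. rewrite Ppow_add by auto.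
  apply sumV_ext; intros. now rewrite Ppow_1.
Qed.

Hypothesis P_nonneg : forall u v, (u < N)%nat -> (v < N)%nat -> 0 <= P u v.
Hypothesis P_rowsum : forall u, (u < N)%nat -> sumV N (fun v => P u v) = 1.

Lemma Ppow_nonneg t x z : (z < N)%nat -> 0 <= Ppow N P t x z.
Proof.
  revert z. induction t as [|t IH]; intros z Hz; simpl.
  - destruct (Nat.eqb x z); lra.
  - apply sumV_nonneg. intros. apply Rmult_le_pos; auto.
Qed.

Lemma Ppow_rowsum t x : (x < N)%nat -> sumV N (fun z => Ppow N P t x z) = 1.
Proof.
  intros Hx. induction t as [|t IH].
  - rewrite <- (sum_delta_left x (fun _ => 1) Hx). apply sumV_ext; intros; ring.
  - simpl Ppow. rewrite sumV_swap, <- IH. apply sumV_ext; intros w Hw.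
    rewrite sumV_scal_l, P_rowsum by auto. ring.
Qed.

Lemma Ppow_pos_add a b x y z : (y < N)%nat -> (z < N)%nat ->
  0 < Ppow N P a x y -> 0 < Ppow N P b y z -> 0 < Ppow N P (a + b) x z.
Proof.
  intros Hy Hz H1 H2. rewrite Ppow_add by auto.
  eapply Rlt_le_trans; [|apply (sumV_single N (fun w => Ppow N P a x w * Ppow N P b w z) y)]; auto.
  - now apply Rmult_lt_0_compat.
  - intros j Hj. apply Rmult_le_pos; apply Ppow_nonneg; auto.
Qed.

End MatrixPowers.

Section Stationary.
Variables (N : nat) (P : nat -> nat -> R) (pi : nat -> R).
Hypothesis pi_invariant : forall v, (v < N)%nat -> sumV N (fun u => pi u * P u v) = pi v.

Lemma pi_invariant_pow t z : (z < N)%nat -> sumV N (fun u => pi u * Ppow N P t u z) = pi z.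
Proof.
  revert z. induction t as [|t IH]; intros z Hz; [now apply sum_delta_right|].
  simpl Ppow.
  transitivity (sumV N (fun u => sumV N (fun w => pi u * Ppow N P t u w * P w z))).
  { apply sumV_ext; intros. rewrite <- sumV_scal_l. apply sumV_ext; intros; ring. }
  rewrite sumV_swap, <- (pi_invariant z Hz). apply sumV_ext; intros w Hw.
  now rewrite sumV_scal_r, IH.
Qed.

End Stationary.

Lemma reversible_pow N P pi s u w : reversible N P pi -> (u < N)%nat -> (w < N)%nat ->
  pi u * Ppow N P s u w = pi w * Ppow N P s w u.
Proof.
  intros Hrev. revert u w. induction s as [|s IH]; intros u w Hu Hw.
  - simpl. destruct (Nat.eqb_spec u w); destruct (Nat.eqb_spec w u); subst; try lia; ring.
  - rewrite (Ppow_S_left N P s w u) by auto. simpl Ppow at 1. rewrite <- !sumV_scal_l.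
    apply sumV_ext; intros x Hx.
    transitivity ((pi u * Ppow N P s u x) * P x w); [ring|]. rewrite IH by auto.
    transitivity (Ppow N P s x u * (pi x * P x w)); [ring|]. rewrite Hrev by auto. ring.
Qed.

(** * The L1 distance of a row of [P^t] to [pi] *)

Definition dist1 (N : nat) (P : nat -> nat -> R) (pi : nat -> R) (t x : nat) : R :=
  sumV N (fun z => Rabs (Ppow N P t x z - pi z)).

Lemma dTV_row_dist1 N P pi t x : dTV_row N P pi t x = / 2 * dist1 N P pi t x.
Proof. reflexivity. Qed.

Lemma dist1_nonneg N P pi t x : 0 <= dist1 N P pi t x.
Proof. apply sumV_nonneg. intros; apply Rabs_pos. Qed.

Section Distance.
Variables (N : nat) (P : nat -> nat -> R) (pi : nat -> R).
Hypothesis P_nonneg : forall u v, (u < N)%nat -> (v < N)%nat -> 0 <= P u v.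
Hypothesis P_rowsum : forall u, (u < N)%nat -> sumV N (fun v => P u v) = 1.
Hypothesis pi_nonneg : forall v, (v < N)%nat -> 0 <= pi v.
Hypothesis pi_sum : sumV N pi = 1.
Hypothesis pi_invariant : forall v, (v < N)%nat -> sumV N (fun u => pi u * P u v) = pi v.

Lemma dist1_le_2 t x : (x < N)%nat -> dist1 N P pi t x <= 2.
Proof.
  intros Hx. unfold dist1.
  apply Rle_trans with (sumV N (fun z => Ppow N P t x z + pi z)).
  - apply sumV_le; intros z Hz.
    pose proof (Ppow_nonneg N P P_nonneg t x z Hz). pose proof (pi_nonneg z Hz).
    unfold Rabs; destruct Rcase_abs; lra.
  - rewrite sumV_plus, Ppow_rowsum, pi_sum by auto. lra.
Qed.

Lemma dist1_nonincreasing a b x : (x < N)%nat -> dist1 N P pi (a + b) x <= dist1 N P pi a x.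
Proof.
  intros Hx. unfold dist1.
  apply Rle_trans with
    (sumV N (fun z => sumV N (fun y => Rabs (Ppow N P a x y - pi y) * Ppow N P b y z))).
  - apply sumV_le; intros z Hz.
    assert (E : Ppow N P (a + b) x z - pi z
                = sumV N (fun y => (Ppow N P a x y - pi y) * Ppow N P b y z)).
    { rewrite (Ppow_add N P a b x z Hz), <- (pi_invariant_pow N P pi pi_invariant b z Hz),
        <- sumV_minus.
      apply sumV_ext; intros; ring. }
    rewrite E. eapply Rle_trans; [apply sumV_abs|].
    apply sumV_le; intros y Hy. rewrite Rabs_mult, (Rabs_right (Ppow N P b y z)); [lra|].
    apply Rle_ge, Ppow_nonneg; auto.
  - rewrite sumV_swap. apply sumV_le; intros y Hy.
    rewrite sumV_scal_l, Ppow_rowsum by auto. lra.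
Qed.

(* Splitting [a + b] steps: for any [alpha],
   [P^(a+b)_{x,z} - pi_z = sum_y (P^a_{x,y} - alpha pi_y) (P^b_{y,z} - pi_z)],
   so a uniform bound [c] on the rows at time [b] transfers to time [a + b]. *)
Lemma dist1_split a b x alpha c : (x < N)%nat ->
  (forall y, (y < N)%nat -> dist1 N P pi b y <= c) ->
  dist1 N P pi (a + b) x <= sumV N (fun y => Rabs (Ppow N P a x y - alpha * pi y)) * c.
Proof.
  intros Hx Hc. unfold dist1 at 1.
  assert (E : forall z, (z < N)%nat -> Ppow N P (a + b) x z - pi z
     = sumV N (fun y => (Ppow N P a x y - alpha * pi y) * (Ppow N P b y z - pi z))).
  { intros z Hz.
    transitivity (sumV N (fun y => Ppow N P a x y * Ppow N P b y z - Ppow N P a x y * pi z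
      - alpha * (pi y * Ppow N P b y z) + (alpha * pi z) * pi y)).
    2: { apply sumV_ext; intros; ring. }
    rewrite sumV_plus, !sumV_minus, sumV_scal_r, !sumV_scal_l, Ppow_rowsum,
      (pi_invariant_pow N P pi pi_invariant b z Hz), pi_sum, <- Ppow_add by auto.
    ring. }
  apply Rle_trans with
    (sumV N (fun z => sumV N (fun y => Rabs (Ppow N P a x y - alpha * pi y)
                                       * Rabs (Ppow N P b y z - pi z)))).
  - apply sumV_le; intros z Hz. rewrite E by auto. eapply Rle_trans; [apply sumV_abs|].
    apply sumV_le; intros. rewrite Rabs_mult. lra.
  - rewrite sumV_swap, <- sumV_scal_r. apply sumV_le; intros y Hy.
    rewrite sumV_scal_l. apply Rmult_le_compat_l; [apply Rabs_pos | now apply Hc].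
Qed.

Lemma dist1_uniform_persists a b x c : (x < N)%nat ->
  (forall y, (y < N)%nat -> dist1 N P pi b y <= c) -> dist1 N P pi (a + b) x <= c.
Proof.
  intros Hx Hc. eapply Rle_trans; [apply (dist1_split a b x 0 c Hx Hc)|].
  rewrite (sumV_ext N _ (fun y => Ppow N P a x y)).
  - rewrite Ppow_rowsum by auto. lra.
  - intros y Hy. rewrite Rmult_0_l, Rminus_0_r. apply Rabs_right, Rle_ge, Ppow_nonneg; auto.
Qed.

Lemma dist1_submult a b x c : (x < N)%nat ->
  (forall y, (y < N)%nat -> dist1 N P pi b y <= c) ->
  dist1 N P pi (a + b) x <= dist1 N P pi a x * c.
Proof.
  intros Hx Hc. eapply Rle_trans; [apply (dist1_split a b x 1 c Hx Hc)|].
  right. f_equal. apply sumV_ext; intros. now rewrite Rmult_1_l.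
Qed.

Lemma dist1_geometric tg q : (forall y, (y < N)%nat -> dist1 N P pi tg y <= q) ->
  forall k r x, (x < N)%nat -> dist1 N P pi (S k * tg + r) x <= q ^ S k.
Proof.
  intros Htg k. induction k as [|k IH]; intros r x Hx.
  - replace (1 * tg + r)%nat with (r + tg)%nat by lia. simpl. rewrite Rmult_1_r.
    now apply dist1_uniform_persists.
  - replace (S (S k) * tg + r)%nat with (tg + (S k * tg + r))%nat by lia.
    eapply Rle_trans; [apply dist1_submult; eauto|].
    pose proof (dist1_nonneg N P pi (S k * tg + 0) x).
    change (q ^ S (S k)) with (q * q ^ S k).
    apply Rmult_le_compat_r; [|now apply Htg].
    eapply Rle_trans; [exact H | apply IH; auto].
Qed.

Lemma dist1_block_sum tg q w : (1 <= tg)%nat -> 0 <= q < 1 -> (w < N)%nat ->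
  (forall y, (y < N)%nat -> dist1 N P pi tg y <= q) ->
  forall k, (1 - q) * sumV (S k * tg) (fun s => dist1 N P pi s w)
            <= INR tg * (2 * (1 - q) + q * (1 - q ^ k)).
Proof.
  intros Htg Hq Hw Hdec. set (F := fun s => dist1 N P pi s w).
  induction k as [|k IH].
  - apply Rle_trans with ((1 - q) * sumV (1 * tg) (fun _ => 2)).
    + apply Rmult_le_compat_l; [lra|]. apply sumV_le; intros. now apply dist1_le_2.
    + rewrite sumV_const, Nat.mul_1_l. simpl. lra.
  - replace (S (S k) * tg)%nat with (S k * tg + tg)%nat by lia. rewrite sumV_add.
    assert (Hblock : sumV tg (fun r => F (S k * tg + r)%nat) <= INR tg * q ^ S k).
    { rewrite <- sumV_const. apply sumV_le; intros r Hr. now apply dist1_geometric. }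
    simpl pow in *. assert (0 <= q ^ k) by (apply pow_le; lra).
    pose proof (pos_INR tg). nra.
Qed.

Lemma dist1_sum_bound tg q w : 0 <= q < 1 -> (w < N)%nat ->
  (forall y, (y < N)%nat -> dist1 N P pi tg y <= q) ->
  forall T, (1 - q) * sumV T (fun s => dist1 N P pi s w) <= INR tg * (2 - q).
Proof.
  intros Hq Hw Hdec T. set (F := fun s => dist1 N P pi s w).
  destruct tg as [|tg'].
  - (* [tg = 0]: every row is already at [pi], since [dist1 s w <= q^(k+1)] for all [k]. *)
    rewrite sumV_zero; [simpl; lra|]. intros s Hs.
    apply Rle_antisym; [|apply dist1_nonneg]. apply Rnot_lt_le. intros Hpos.
    destruct (pow_lt_1_zero q ltac:(rewrite Rabs_right; lra) (F s) Hpos) as [k Hk].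
    specialize (Hk (S k) (Nat.le_succ_diag_r k)).
    rewrite Rabs_right in Hk by (apply Rle_ge, pow_le; lra).
    pose proof (dist1_geometric 0 q Hdec k s w Hw) as Hgeo.
    replace (S k * 0 + s)%nat with s in Hgeo by lia. unfold F in Hk. lra.
  - set (tg := S tg') in *.
    assert (Hmono : sumV T F <= sumV (S T * tg) F).
    { replace (S T * tg)%nat with (T + (S T * tg - T))%nat by (unfold tg; nia).
      rewrite sumV_add. pose proof (sumV_nonneg (S T * tg - T) (fun r => F (T + r)%nat)
        (fun r _ => dist1_nonneg N P pi (T + r) w)). lra. }
    pose proof (dist1_block_sum tg q w ltac:(unfold tg; lia) Hq Hw Hdec T).
    assert (0 <= q ^ T) by (apply pow_le; lra). pose proof (pos_INR tg).
    assert ((1 - q) * sumV T F <= (1 - q) * sumV (S T * tg) F)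
      by (apply Rmult_le_compat_l; lra).
    fold F in H. assert (0 <= INR tg * (q * q ^ T)) by (apply Rmult_le_pos; nra).
    nra.
Qed.

End Distance.

(** * Ergodic chains converge to [pi] *)

Lemma nat_least (Q : nat -> Prop) :
  (exists n, Q n) -> exists n, Q n /\ forall m, Q m -> (n <= m)%nat.
Proof.
  intros [n Hn]. revert Hn. induction n as [n IH] using (well_founded_induction lt_wf).
  intros Hn. destruct (classic (exists m, Q m /\ (m < n)%nat)) as [[m [Hm Hlt]]|Hno].
  - exact (IH m Hlt Hm).
  - exists n. split; auto. intros m Hm. apply Nat.nlt_ge. intros Hlt. apply Hno; eauto.
Qed.

(* An additively closed set of naturals with gcd 1 contains all large integers;
   applied to the return times of a state of an aperiodic chain. *)
Section NumericalSemigroup.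
Variable A : nat -> Prop.
Hypothesis A_add : forall p q, A p -> A q -> A (p + q).

Lemma semigroup_mult s k : A s -> (1 <= k)%nat -> A (k * s).
Proof.
  intros Hs Hk. induction k as [|k IH]; [lia|]. destruct k as [|k].
  - now rewrite Nat.mul_1_l.
  - replace (S (S k) * s)%nat with (s + S k * s)%nat by lia. apply A_add; [exact Hs|].
    apply IH; lia.
Qed.

Definition semigroup_gap (d : nat) : Prop :=
  (1 <= d)%nat /\ exists p, (1 <= p)%nat /\ A p /\ A (p + d).

(* The least gap divides every positive element: otherwise the remainder
   would produce a smaller gap. *)
Lemma least_gap_divides d : semigroup_gap d ->
  (forall d', semigroup_gap d' -> (d <= d')%nat) ->
  forall t, (1 <= t)%nat -> A t -> Nat.divide d t.
Proof.
  intros [Hd1 [p [Hp1 [Hp Hpd]]]] Hmin t Ht1 Ht.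
  pose proof (Nat.div_mod t d ltac:(lia)) as Edm.
  pose proof (Nat.mod_upper_bound t d ltac:(lia)).
  set (q := (t / d)%nat) in *. set (r := (t mod d)%nat) in *.
  destruct (Nat.eq_dec r 0) as [Hr0|Hr0]; [exists q; lia|].
  exfalso.
  assert (Hbig : A (S q * (p + d))%nat) by (apply semigroup_mult; auto; lia).
  assert (Hsmall : A (t + S q * p)%nat) by (apply A_add; auto; apply semigroup_mult; auto; lia).
  assert (Hgap : semigroup_gap (d - r)).
  { split; [lia|]. exists (t + S q * p)%nat. split; [lia|]. split; auto.
    replace (t + S q * p + (d - r))%nat with (S q * (p + d))%nat by nia. auto. }
  specialize (Hmin _ Hgap). lia.
Qed.

(* With a gap 1 at [p], every [t >= p^2] is [e p + r (p + 1)] with [e, r >= 0]. *)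
Lemma unit_gap_eventually p : (1 <= p)%nat -> A p -> A (p + 1) ->
  forall t, (p * p <= t)%nat -> A t.
Proof.
  intros Hp1 Hp Hp' t Ht.
  pose proof (Nat.div_mod t p ltac:(lia)) as Edm. pose proof (Nat.mod_upper_bound t p ltac:(lia)).
  set (q := (t / p)%nat) in *. set (r := (t mod p)%nat) in *.
  assert (Hqp : (p <= q)%nat) by nia.
  destruct (Nat.eq_dec r 0) as [Hr0|Hr0].
  - replace t with (q * p)%nat by lia. apply semigroup_mult; auto; lia.
  - replace t with ((q - r) * p + r * (p + 1))%nat by nia.
    apply A_add; apply semigroup_mult; auto; lia.
Qed.

Lemma semigroup_eventually : (exists a, (1 <= a)%nat /\ A a) ->
  (forall d, (forall t, (1 <= t)%nat -> A t -> Nat.divide d t) -> d = 1%nat) ->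
  exists n0, forall t, (n0 <= t)%nat -> A t.
Proof.
  intros [a [Ha1 Ha]] Hgcd.
  destruct (nat_least semigroup_gap) as [d [Hd Hmin]].
  { exists a. split; [exact Ha1|]. exists a. repeat split; auto. }
  assert (d = 1%nat) by (apply Hgcd, least_gap_divides; auto). subst d.
  destruct Hd as [_ [p [Hp1 [Hp Hp']]]]. exists (p * p)%nat. now apply unit_gap_eventually.
Qed.

End NumericalSemigroup.

Lemma finite_eventually (Q : nat -> nat -> Prop) n :
  (forall x, (x < n)%nat -> exists k, forall m, (k <= m)%nat -> Q x m) ->
  exists k, forall x, (x < n)%nat -> forall m, (k <= m)%nat -> Q x m.
Proof.
  induction n as [|n IH]; intros H; [exists 0%nat; intros; lia|].
  destruct IH as [k1 H1]; [intros; apply H; lia|].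
  destruct (H n ltac:(lia)) as [k2 H2]. exists (Nat.max k1 k2). intros x Hx m Hm.
  destruct (Nat.eq_dec x n) as [->|Hne]; [apply H2 | apply H1]; lia.
Qed.

Lemma fold_min_spec (f : nat -> R) i n : 0 < i -> (forall x, (x < n)%nat -> 0 < f x) ->
  0 < fold_right Rmin i (map f (seq 0 n)) /\
  forall x, (x < n)%nat -> fold_right Rmin i (map f (seq 0 n)) <= f x.
Proof.
  intros Hi Hf. split.
  - assert (Hl : forall y, In y (map f (seq 0 n)) -> 0 < y).
    { intros y Hy. apply in_map_iff in Hy. destruct Hy as [u [<- Hu]].
      apply in_seq in Hu. apply Hf. lia. }
    induction (map f (seq 0 n)) as [|a l IH]; simpl; auto.
    apply Rmin_pos; [apply Hl | apply IH; intros; apply Hl]; simpl; auto.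
  - intros x Hx. assert (Hin : In (f x) (map f (seq 0 n))) by (apply in_map, in_seq; lia).
    induction (map f (seq 0 n)) as [|a l IH]; simpl in *; [contradiction|].
    destruct Hin as [<-|Hin]; [apply Rmin_l|].
    eapply Rle_trans; [apply Rmin_r | auto].
Qed.

Section Ergodic.
Variables (N : nat) (P : nat -> nat -> R) (pi : nat -> R).
Hypothesis HN : (0 < N)%nat.
Hypothesis P_nonneg : forall u v, (u < N)%nat -> (v < N)%nat -> 0 <= P u v.
Hypothesis P_rowsum : forall u, (u < N)%nat -> sumV N (fun v => P u v) = 1.
Hypothesis P_irreducible : irreducible N P.
Hypothesis P_aperiodic : aperiodic N P.

Lemma return_eventually v : (v < N)%nat ->
  exists n0, forall t, (n0 <= t)%nat -> 0 < Ppow N P t v v.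
Proof.
  intros Hv. apply (semigroup_eventually (fun t => 0 < Ppow N P t v v)).
  - intros p q Hp Hq. now apply (Ppow_pos_add N P P_nonneg p q v v v).
  - destruct (sumV_pos_entry N (fun u => P v u) (fun i Hi => P_nonneg v i Hv Hi) (P_rowsum v Hv))
      as [u [Hu Hvu]].
    destruct (P_irreducible u v Hu Hv) as [b Hb].
    exists (1 + b)%nat. split; [lia|].
    apply (Ppow_pos_add N P P_nonneg 1 b v u v); auto. now rewrite Ppow_1.
  - exact (P_aperiodic v Hv).
Qed.

Lemma primitive_power : exists m, forall x y, (x < N)%nat -> (y < N)%nat -> 0 < Ppow N P m x y.
Proof.
  destruct (finite_eventually (fun x m => forall y, (y < N)%nat -> 0 < Ppow N P m x y) N)
    as [k Hk].
  - intros x Hx. destruct (return_eventually x Hx) as [n0 Hn0].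
    destruct (finite_eventually (fun y m => 0 < Ppow N P m x y) N) as [k' Hk'].
    { intros y Hy. destruct (P_irreducible x y Hx Hy) as [a Ha].
      exists (n0 + a)%nat. intros m Hm. replace m with ((m - a) + a)%nat by lia.
      apply (Ppow_pos_add N P P_nonneg _ _ x x y); auto. apply Hn0; lia. }
    exists k'. intros m Hm y Hy. now apply Hk'.
  - exists k. intros x y Hx Hy. now apply Hk.
Qed.

Hypothesis pi_nonneg : forall v, (v < N)%nat -> 0 <= pi v.
Hypothesis pi_sum : sumV N pi = 1.
Hypothesis pi_invariant : forall v, (v < N)%nat -> sumV N (fun u => pi u * P u v) = pi v.

Lemma pi_pos u : (u < N)%nat -> 0 < pi u.
Proof.
  intros Hu. destruct (sumV_pos_entry N pi pi_nonneg pi_sum) as [u0 [Hu0 Hp0]].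
  destruct (P_irreducible u0 u Hu0 Hu) as [t Ht].
  rewrite <- (pi_invariant_pow N P pi pi_invariant t u Hu).
  eapply Rlt_le_trans; [|apply (sumV_single N (fun x => pi x * Ppow N P t x u) u0)]; auto.
  - now apply Rmult_lt_0_compat.
  - intros j Hj. apply Rmult_le_pos; auto. now apply Ppow_nonneg.
Qed.

Lemma doeblin_decay m alpha :
  (forall x y, (x < N)%nat -> (y < N)%nat -> 0 <= Ppow N P m x y - alpha * pi y) ->
  forall k y, (y < N)%nat -> dist1 N P pi (k * m) y <= 2 * (1 - alpha) ^ k.
Proof.
  intros Hminor. induction k as [|k IH]; intros y Hy.
  - simpl. rewrite Rmult_1_r. now apply dist1_le_2.
  - replace (S k * m)%nat with (m + k * m)%nat by lia.
    eapply Rle_trans; [apply (dist1_split N P pi P_rowsum pi_sum pi_invariant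
                                m (k * m) y alpha _ Hy IH)|].
    rewrite (sumV_ext N _ (fun z => Ppow N P m y z - alpha * pi z))
      by (intros; apply Rabs_right, Rle_ge, Hminor; auto).
    rewrite sumV_minus, sumV_scal_l, Ppow_rowsum, pi_sum by auto. simpl. lra.
Qed.

Lemma dist1_converges e : 0 < e -> forall x, (x < N)%nat -> exists t, dist1 N P pi t x <= e.
Proof.
  intros He x Hx. destruct primitive_power as [m Hm].
  set (rowmin := fun x => fold_right Rmin 1 (map (fun y => Ppow N P m x y) (seq 0 N))).
  set (alpha := fold_right Rmin 1 (map rowmin (seq 0 N))).
  assert (Hrow : forall x, (x < N)%nat -> 0 < rowmin x /\
            forall y, (y < N)%nat -> rowmin x <= Ppow N P m x y).
  { intros x' Hx'. apply fold_min_spec; [lra|]. intros; now apply Hm. }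
  destruct (fold_min_spec rowmin 1 N ltac:(lra) (fun x' Hx' => proj1 (Hrow x' Hx')))
    as [Halpha Hle].
  fold alpha in Halpha, Hle.
  assert (Hpi1 : forall y, (y < N)%nat -> pi y <= 1)
    by (intros y Hy; rewrite <- pi_sum; now apply sumV_single).
  assert (Hminor : forall x y, (x < N)%nat -> (y < N)%nat -> 0 <= Ppow N P m x y - alpha * pi y).
  { intros x' y Hx' Hy. pose proof (Hle x' Hx'). pose proof (proj2 (Hrow x' Hx') y Hy).
    pose proof (Hpi1 y Hy). pose proof (pi_nonneg y Hy). nra. }
  assert (Halpha1 : 0 <= 1 - alpha).
  { replace (1 - alpha) with (sumV N (fun z => Ppow N P m 0 z) - alpha * sumV N pi)
      by (rewrite (Ppow_rowsum N P P_rowsum m 0 HN), pi_sum; ring).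
    rewrite <- sumV_scal_l, <- sumV_minus. apply sumV_nonneg. intros; now apply Hminor. }
  destruct (pow_lt_1_zero (1 - alpha) ltac:(rewrite Rabs_right; lra) (e / 2)
              ltac:(lra)) as [k Hk].
  specialize (Hk k (le_n k)). rewrite Rabs_right in Hk by (apply Rle_ge, pow_le; lra).
  exists (k * m)%nat. eapply Rle_trans; [apply doeblin_decay; auto | lra].
Qed.

(* At the mixing time [tg = tau(g)] every row is within [2 g] of [pi]:
   each row hits distance [2 g] at a first time [<= tg] and never leaves. *)
Lemma mixing_time_all_rows g tg : 0 < g -> is_tau N P pi g tg ->
  forall x, (x < N)%nat -> dist1 N P pi tg x <= 2 * g.
Proof.
  intros Hg [_ Htau] x Hx.
  destruct (nat_least (fun t => dTV_row N P pi t x <= g)) as [t0 [H0 Hmin]].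
  { destruct (dist1_converges (2 * g) ltac:(lra) x Hx) as [t Ht].
    exists t. rewrite dTV_row_dist1. lra. }
  assert (Ht0 : (t0 <= tg)%nat).
  { apply (Htau x t0 Hx). split; auto. intros s Hs. apply Rnot_le_lt. intros Hle.
    specialize (Hmin s Hle). lia. }
  replace tg with (t0 + (tg - t0))%nat by lia.
  eapply Rle_trans; [now apply dist1_nonincreasing|].
  rewrite dTV_row_dist1 in H0. lra.
Qed.

End Ergodic.

(** * The functional-router model *)

Lemma chi_S N sigma chi0 t u :
  chi N sigma chi0 (S t) u = sumVn N (fun v => Zflow N sigma chi0 t v u).
Proof.
  unfold Zflow, cumchi, chi. simpl. now destruct (rstate N sigma chi0 t).
Qed.

Lemma Icount_total N sigma v a c : (forall j, (sigma v j < N)%nat) ->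
  sumV N (fun u => INR (Icount sigma v u a (a + c))) = INR c.
Proof.
  intros Hs. unfold Icount. replace (a + c - a)%nat with c by lia.
  induction c as [|c IH]; [now apply sumV_zero|].
  transitivity (sumV N (fun u => INR (length (filter (fun j => Nat.eqb (sigma v j) u) (seq a c)))
                               + (if Nat.eqb (sigma v (a + c)%nat) u then 1 else 0))).
  { apply sumV_ext; intros u Hu. rewrite seq_S, filter_app, length_app, plus_INR. simpl.
    destruct (Nat.eqb (sigma v (a + c)%nat) u); simpl; lra. }
  rewrite sumV_plus, IH, S_INR, (sumV_point N _ (sigma v (a + c)%nat) (Hs _)).
  - now rewrite Nat.eqb_refl.
  - intros j Hj Hne. destruct (Nat.eqb_spec (sigma v (a + c)%nat) j); [lia|reflexivity].
Qed.

Lemma Icount_off_range sigma v u a b : (forall j, sigma v j <> u) -> Icount sigma v u a b = 0%nat.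
Proof.
  intros H. unfold Icount.
  induction (seq a (b - a)) as [|j l IH]; simpl; auto.
  destruct (Nat.eqb_spec (sigma v j) u); [now exfalso; apply (H j)|exact IH].
Qed.

Lemma mu_0 N P chi0 w : (w < N)%nat -> mu N P chi0 0 w = INR (chi0 w).
Proof. intros Hw. unfold mu. now rewrite sum_delta_right. Qed.

Lemma mu_S N P chi0 T w : mu N P chi0 (S T) w = sumV N (fun x => mu N P chi0 T x * P x w).
Proof.
  unfold mu. simpl Ppow.
  transitivity (sumV N (fun v => sumV N (fun x => INR (chi0 v) * Ppow N P T v x * P x w))).
  { apply sumV_ext; intros. rewrite <- sumV_scal_l. apply sumV_ext; intros; ring. }
  rewrite sumV_swap. apply sumV_ext; intros. now rewrite sumV_scal_r.
Qed.

Definition routing_error N P sigma chi0 t u : R :=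
  INR (chi N sigma chi0 (S t) u) - sumV N (fun v => INR (chi N sigma chi0 t v) * P v u).

Lemma duhamel N P sigma chi0 T : forall w, (w < N)%nat ->
  INR (chi N sigma chi0 T w) - mu N P chi0 T w =
  sumV T (fun s => sumV N (fun u => routing_error N P sigma chi0 (T - 1 - s) u * Ppow N P s u w)).
Proof.
  induction T as [|T IH]; intros w Hw.
  - rewrite mu_0 by auto. change (chi N sigma chi0 0 w) with (chi0 w).
    change (sumV 0 _) with 0. ring.
  - rewrite sumV_shift, mu_S, Nat.sub_0_r, sum_delta_right by auto.
    replace (S T - 1)%nat with T by lia.
    assert (E : sumV N (fun v => INR (chi N sigma chi0 T v) * P v w)
                - sumV N (fun x => mu N P chi0 T x * P x w)
      = sumV T (fun s => sumV N (fun u =>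
          routing_error N P sigma chi0 (T - S s) u * Ppow N P (S s) u w))).
    { rewrite <- sumV_minus.
      transitivity (sumV N (fun x => sumV T (fun s => sumV N (fun u =>
           routing_error N P sigma chi0 (T - 1 - s) u * Ppow N P s u x * P x w)))).
      { apply sumV_ext; intros x Hx. rewrite <- Rmult_minus_distr_r, IH, <- sumV_scal_r by auto.
        apply sumV_ext; intros. rewrite <- sumV_scal_r. apply sumV_ext; intros; ring. }
      rewrite sumV_swap. apply sumV_ext; intros s Hs.
      replace (T - S s)%nat with (T - 1 - s)%nat by lia.
      rewrite sumV_swap. apply sumV_ext; intros u Hu. simpl Ppow.
      rewrite <- sumV_scal_l. apply sumV_ext; intros; ring. }
    rewrite <- E. unfold routing_error. ring.
Qed.

Lemma posb_true x : 0 < x -> posb x = true.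
Proof. unfold posb. destruct (Rlt_dec 0 x); auto; lra. Qed.

Lemma posb_false x : ~ 0 < x -> posb x = false.
Proof. unfold posb. destruct (Rlt_dec 0 x); auto; lra. Qed.

Lemma degree_le_maxdeg N P u : (u < N)%nat -> (degree N P u <= maxdeg N P)%nat.
Proof.
  intros Hu. unfold maxdeg.
  assert (Hin : In (degree N P u) (map (degree N P) (seq 0 N))) by (apply in_map, in_seq; lia).
  induction (map (degree N P) (seq 0 N)) as [|a l IH]; simpl in *; [contradiction|].
  destruct Hin as [->|Hin]; [lia | specialize (IH Hin); lia].
Qed.

Lemma pimin_spec N pi : (0 < N)%nat -> (forall u, (u < N)%nat -> 0 < pi u) ->
  0 < pimin N pi /\ forall u, (u < N)%nat -> pimin N pi <= pi u.
Proof. intros HN Hpi. apply fold_min_spec; auto. Qed.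

(** * Bounding one propagated routing error (reversible case) *)

Section OneStep.
Variables (N : nat) (P : nat -> nat -> R) (pi : nat -> R).
Variables (sigma : nat -> nat -> nat) (chi0 : nat -> nat) (Psi : R).
Hypothesis HN : (0 < N)%nat.
Hypothesis P_nonneg : forall u v, (u < N)%nat -> (v < N)%nat -> 0 <= P u v.
Hypothesis P_rowsum : forall u, (u < N)%nat -> sumV N (fun v => P u v) = 1.
Hypothesis pi_positive : forall u, (u < N)%nat -> 0 < pi u.
Hypothesis P_reversible : reversible N P pi.
Hypothesis sigma_valid : valid_routers N P sigma.
Hypothesis Psi_bounds : Psi_bound N P sigma chi0 Psi.

Definition discrepancy (t v u : nat) : R :=
  INR (Zflow N sigma chi0 t v u) - INR (chi N sigma chi0 t v) * P v u.

Lemma routing_error_decomp t u :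
  routing_error N P sigma chi0 t u = sumV N (fun v => discrepancy t v u).
Proof. unfold routing_error, discrepancy. now rewrite chi_S, sumVn_INR, sumV_minus. Qed.

(* Every router sends out exactly its [chi_v] tokens, and [P] is stochastic. *)
Lemma discrepancy_row_zero t v : (v < N)%nat -> sumV N (fun u => discrepancy t v u) = 0.
Proof.
  intros Hv. unfold discrepancy, Zflow.
  rewrite sumV_minus, sumV_scal_l, P_rowsum, Icount_total by (auto; intros; apply sigma_valid, Hv).
  ring.
Qed.

Lemma discrepancy_bound t v u : (v < N)%nat -> (u < N)%nat ->
  Rabs (discrepancy t v u) <= Psi * (if posb (P v u) then 1 else 0).
Proof.
  intros Hv Hu. destruct (Rlt_dec 0 (P v u)) as [Hp|Hp].
  - rewrite posb_true, Rmult_1_r by auto. now apply Psi_bounds.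
  - rewrite posb_false by auto. assert (P v u = 0) by (pose proof (P_nonneg v u Hv Hu); lra).
    unfold discrepancy, Zflow. rewrite Icount_off_range.
    + rewrite H. simpl. rewrite Rmult_0_r, Rminus_0_r, Rabs_R0. lra.
    + intros j Hj. destruct (sigma_valid v j Hv) as [_ Hpj]. rewrite Hj in Hpj. lra.
Qed.

(* [Psi] bounds an absolute value on some edge (row 0 of [P] has one). *)
Lemma Psi_nonneg : 0 <= Psi.
Proof.
  destruct (sumV_pos_entry N (fun u => P 0%nat u) (fun i Hi => P_nonneg 0%nat i HN Hi)
              (P_rowsum 0%nat HN)) as [u [Hu Hpu]].
  pose proof (discrepancy_bound 0 0 u HN Hu). rewrite posb_true in H by auto.
  pose proof (Rabs_pos (discrepancy 0 0 u)). lra.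
Qed.

Lemma edge_symmetric u v : (u < N)%nat -> (v < N)%nat -> posb (P v u) = posb (P u v).
Proof.
  intros Hu Hv. pose proof (P_reversible u v Hu Hv). pose proof (pi_positive u Hu).
  pose proof (pi_positive v Hv). pose proof (P_nonneg u v Hu Hv). pose proof (P_nonneg v u Hv Hu).
  destruct (Rlt_dec 0 (P u v)); destruct (Rlt_dec 0 (P v u));
    try (rewrite !posb_true by auto; reflexivity);
    try (rewrite !posb_false by auto; reflexivity); exfalso; nra.
Qed.

Lemma reversible_transfer s u w : (u < N)%nat -> (w < N)%nat ->
  Rabs (Ppow N P s u w - pi w) <= pi w / pimin N pi * Rabs (Ppow N P s w u - pi u).
Proof.
  intros Hu Hw. destruct (pimin_spec N pi HN pi_positive) as [Hpm Hle].
  pose proof (pi_positive u Hu). pose proof (pi_positive w Hw).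
  assert (E : pi u * Rabs (Ppow N P s u w - pi w) = pi w * Rabs (Ppow N P s w u - pi u)).
  { assert (Habs : forall a x, 0 < a -> a * Rabs x = Rabs (a * x))
      by (intros a x Ha; rewrite Rabs_mult, (Rabs_right a); lra).
    rewrite !Habs by auto. f_equal.
    rewrite !Rmult_minus_distr_l, (reversible_pow N P pi s u w) by auto. ring. }
  apply (Rmult_le_reg_r (pimin N pi)); auto.
  replace (pi w / pimin N pi * Rabs (Ppow N P s w u - pi u) * pimin N pi)
    with (pi w * Rabs (Ppow N P s w u - pi u)) by (field; lra).
  rewrite <- E, (Rmult_comm (pi u)). apply Rmult_le_compat_l; [apply Rabs_pos | now apply Hle].
Qed.

(* Since every router's discrepancies sum to 0, the stationary mass [pi_w] can be
   subtracted from the propagator. *)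
Lemma propagated_error_centered t s w :
  sumV N (fun u => routing_error N P sigma chi0 t u * Ppow N P s u w)
  = sumV N (fun u => sumV N (fun v => discrepancy t v u * (Ppow N P s u w - pi w))).
Proof.
  rewrite (sumV_ext N (fun u => sumV N (fun v => discrepancy t v u * (Ppow N P s u w - pi w)))
    (fun u => sumV N (fun v => discrepancy t v u) * Ppow N P s u w
              - sumV N (fun v => discrepancy t v u * pi w)))
    by (intros u Hu; rewrite <- sumV_scal_r, <- sumV_minus; apply sumV_ext; intros; ring).
  rewrite sumV_minus, sumV_swap,
    (sumV_zero N (fun v => sumV N (fun u => discrepancy t v u * pi w))), Rminus_0_r.
  - apply sumV_ext; intros u Hu. now rewrite routing_error_decomp.
  - intros v Hv. now rewrite sumV_scal_r, discrepancy_row_zero, Rmult_0_l.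
Qed.

(* The [s]-th term of Duhamel's formula is at most
   [Psi Delta (pi_w / pi_min) ||P^s_{w,.} - pi||_1]: the routers of the neighbours [v]
   of [u] contribute at most [Psi deg(u) |P^s_{u,w} - pi_w|], which reversibility turns
   into row [w]. *)
Lemma propagated_error_bound t s w : (w < N)%nat ->
  Rabs (sumV N (fun u => routing_error N P sigma chi0 t u * Ppow N P s u w))
  <= Psi * INR (maxdeg N P) * (pi w / pimin N pi) * dist1 N P pi s w.
Proof.
  intros Hw. destruct (pimin_spec N pi HN pi_positive) as [Hpm _].
  pose proof Psi_nonneg as HPsi.
  set (K := pi w / pimin N pi).
  assert (HK : 0 <= K) by (apply Rlt_le, Rdiv_lt_0_compat; auto).
  rewrite propagated_error_centered. eapply Rle_trans; [apply sumV_abs|]. unfold dist1.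
  rewrite <- sumV_scal_l. apply sumV_le; intros u Hu.
  eapply Rle_trans; [apply sumV_abs|].
  pose proof (Rabs_pos (Ppow N P s u w - pi w)) as Hcol.
  apply Rle_trans with
    (sumV N (fun v => (Psi * Rabs (Ppow N P s u w - pi w)) * (if posb (P u v) then 1 else 0))).
  { apply sumV_le; intros v Hv. rewrite Rabs_mult, <- (edge_symmetric u v) by auto.
    pose proof (discrepancy_bound t v u Hv Hu). nra. }
  rewrite sumV_scal_l, <- sumV_count. fold (degree N P u).
  pose proof (le_INR _ _ (degree_le_maxdeg N P u Hu)) as Hdeg.
  pose proof (pos_INR (degree N P u)).
  pose proof (reversible_transfer s u w Hu Hw) as Htransfer. fold K in Htransfer.
  pose proof (Rabs_pos (Ppow N P s w u - pi u)).
  apply Rle_trans with (Psi * (K * Rabs (Ppow N P s w u - pi u)) * INR (maxdeg N P)).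
  - apply Rmult_le_compat; nra.
  - right. ring.
Qed.

End OneStep.

Theorem theorem3p1 (N : nat) (P : nat -> nat -> R) (pi : nat -> R)
  (HN : (0 < N)%nat)
  (Hst : stochastic N P) (Herg : ergodic N P) (Hpi : stationary N P pi)
  (Hrev : reversible N P pi)
  (sigma : nat -> nat -> nat) (Hsigma : valid_routers N P sigma)
  (chi0 : nat -> nat)
  (Psi : R) (HPsi : Psi_bound N P sigma chi0 Psi) :
  forall (w T : nat) (gamma : R) (tg : nat),
    (w < N)%nat -> 0 < gamma < / 2 -> is_tau N P pi gamma tg ->
    Rabs (INR (chi N sigma chi0 T w) - mu N P chi0 T w)
      <= Psi * (2 * (1 - gamma) / (1 - 2 * gamma)) * INR tg
           * (pi w / pimin N pi) * INR (maxdeg N P).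
Proof.
  intros w T g tg Hw Hg Htau.
  destruct Hst as [HP HR]. destruct Herg as [Hirr Hap]. destruct Hpi as [Hpi0 [Hs1 HS]].
  pose proof (pi_pos N P pi HP Hirr Hpi0 Hs1 HS) as Hpos.
  (* Every row is within [2 g] at the mixing time, hence the summed bound with [q = 2 g]. *)
  pose proof (mixing_time_all_rows N P pi HN HP HR Hirr Hap Hpi0 Hs1 HS g tg
                ltac:(lra) Htau) as Hrows.
  pose proof (dist1_sum_bound N P pi HP HR Hpi0 Hs1 HS tg (2 * g) w ltac:(lra) Hw Hrows T)
    as Hsum.
  set (K := Psi * INR (maxdeg N P) * (pi w / pimin N pi)).
  rewrite duhamel by auto. eapply Rle_trans; [apply sumV_abs|].
  apply Rle_trans with (sumV T (fun s => K * dist1 N P pi s w)).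
  { apply sumV_le; intros s Hs. now apply propagated_error_bound. }
  destruct (pimin_spec N pi HN Hpos) as [Hpm _].
  assert (HK : 0 <= K).
  { assert (0 <= Psi) by (eapply Psi_nonneg; eauto).
    pose proof (pos_INR (maxdeg N P)). pose proof (Hpos w Hw).
    apply Rmult_le_pos; [nra|]. apply Rlt_le, Rdiv_lt_0_compat; auto. }
  rewrite sumV_scal_l.
  apply Rle_trans with (K * (INR tg * (2 - 2 * g) / (1 - 2 * g))).
  - apply Rmult_le_compat_l; auto. apply (Rmult_le_reg_l (1 - 2 * g)); [lra|].
    replace ((1 - 2 * g) * (INR tg * (2 - 2 * g) / (1 - 2 * g))) with (INR tg * (2 - 2 * g))
      by (field; lra). exact Hsum.
  - right. unfold K. field. split; apply Rgt_not_eq; lra.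
Qed.
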